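(* Let $k,l$ be positive integers and $G_{k,l}(T):=1-T+T^{lk+1}-T^{k(l+1)}\in\mathbb{C}[T]$. Then $G_{k,l}(T)$ is unitary if and only if $k\in\{1,2\}$.
   Context: A polynomial $f(T)\in 1+T\cdot\mathbb{C}[T]$ is called unitary if there is a unitary matrix $M$ (of some size) such that $f(T)=\det(I-MT)$; equivalently $f(T)=\prod_i(1-\alpha_iT)$ with all $|\alpha_i|=1$. *)

From HB Require Import structures.
From mathcomp Require Import all_boot all_order all_algebra complex.
From mathcomp Require Import Rstruct.
Set Implicit Arguments. Unset Strict Implicit. Unset Printing Implicit Defensive.
Import Order.TTheory GRing.Theory Num.Theory.
Local Open Scope ring_scope.

Definition C : numClosedFieldType := (Rdefinitions.R)[i].

Definition unitary_mx (n : nat) (M : 'M[C]_n) : Prop :=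
  M *m (map_mx Num.conj M)^T = 1%:M.

Definition det_one_minus (n : nat) (M : 'M[C]_n) : {poly C} :=
  \det (1%:M - map_mx polyC M *m ('X)%:M).

Definition unitary_poly (f : {poly C}) : Prop :=
  exists (n : nat) (M : 'M[C]_n), unitary_mx M /\ f = det_one_minus M.

Definition G_poly (k l : nat) : {poly C} :=
  1 - 'X + 'X^(l * k + 1) - 'X^(k * (l + 1)).

(* If [f = det(I - M T)] with [M] unitary of size [n], then [M M^H = I] gives the
   reflection identity [f(z) = c z^n conj(f(1/conj z))] with [c = (-1)^n det M != 0].
   As [G = G_{k,l}] has real coefficients this reads [T^N G = c T^n G^rev], where
   [N = k(l+1)] and [G^rev = T^N G(1/T)]; both factors have nonzero constant terms,
   so [G = c G^rev]. For [k > 2] the coefficient of [T] is [-1] in [G] but [0] in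
   [G^rev]. Conversely [G_{1,l} = 1 - T] and [G_{2,l} = (1 - T)(1 + T^(2l+1))] have
   [G(0) = 1] and all roots on the unit circle, and such a polynomial is
   [det(I - D T)] for the diagonal unitary [D] of its inverse roots. *)

From mathcomp Require Import all_boot all_order all_algebra complex zify ring.
Set Implicit Arguments. Unset Strict Implicit. Unset Printing Implicit Defensive.
Import Order.TTheory GRing.Theory Num.Theory.
Local Open Scope ring_scope.

Lemma nonzero_roots_poly_eq0 (R : numDomainType) (p : {poly R}) :
  (forall z, z != 0 -> root p z) -> p = 0.
Proof.
move=> p_root; apply: (@roots_geq_poly_eq0 _ p [seq i.+1%:R | i <- iota 0 (size p)]).
- by apply/allP => _ /mapP [i _ ->]; apply: p_root; rewrite pnatr_eq0.
- by rewrite map_inj_uniq ?iota_uniq // => i j /eqP; rewrite eqr_nat => /eqP [].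
- by rewrite size_map size_iota.
Qed.

Lemma mulXn_cancel (R : idomainType) (a b : nat) (p q : {poly R}) :
  p`_0 != 0 -> q`_0 != 0 -> 'X^a * p = 'X^b * q -> a = b /\ p = q.
Proof.
move=> p0 q0 pq.
have eq_ab : a = b.
  have coef_at i := congr1 (fun r : {poly R} => r`_i) pq.
  move: (coef_at a) (coef_at b); rewrite !coefXnM !ltnn !subnn.
  case: ltngtP => // _.
  - by move/eqP; rewrite (negPf p0).
  - by move=> _ /eqP; rewrite eq_sym (negPf q0).
split=> //; move: pq; rewrite eq_ab; exact/mulfI/monic_neq0/monicXn.
Qed.

Lemma horner_det_one_minus n (M : 'M[C]_n) (z : C) :
  (det_one_minus M).[z] = \det (1%:M - z *: M).
Proof.
rewrite -horner_evalE /det_one_minus -det_map_mx mul_mx_scalar.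
congr (\det _); apply/matrixP => i j.
by rewrite !mxE rmorphB rmorph_nat /= horner_evalE hornerM hornerX hornerC mulrC.
Qed.

Lemma det_one_minus_scale_adjoint n (w : C) (M : 'M[C]_n) :
  \det (1%:M - w *: (map_mx Num.conj M)^T) = (\det (1%:M - w^* *: M))^*.
Proof.
rewrite -det_map_mx -det_tr; congr (\det _).
by apply/matrixP => i j; rewrite !mxE rmorphB rmorphM /= conjCK rmorph_nat eq_sym.
Qed.

(* [I - z M = -z M (I - z^-1 M^H)] since [M M^H = I]. *)
Lemma unitary_det_one_minus_scale n (M : 'M[C]_n) (z : C) : unitary_mx M -> z != 0 ->
  \det (1%:M - z *: M) = (- z) ^+ n * \det M * (\det (1%:M - (z^-1)^* *: M))^*.
Proof.
move=> unitM z_neq0; rewrite -det_one_minus_scale_adjoint -mulrA -det_mulmx -detZ.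
congr (\det _); rewrite mulmxBr mulmx1 -scalemxAr unitM scalerBr scalerA mulNr divff //.
by rewrite scaleN1r opprK scaleNr -scalemx1 addrC.
Qed.

Lemma unitary_poly_reflect (f : {poly C}) : unitary_poly f ->
  exists (n : nat) (c : C), c != 0 /\
    forall z, z != 0 -> f.[z] = c * z ^+ n * (f.[(z^-1)^*])^*.
Proof.
move=> [n [M [unitM ->]]]; exists n, ((-1) ^+ n * \det M); split.
  have [detM_unit _] := mulmx1_unit unitM.
  by rewrite mulf_neq0 ?signr_eq0 // -unitfE -unitmxE.
move=> z z_neq0; rewrite !horner_det_one_minus unitary_det_one_minus_scale //.
by rewrite [(- z) ^+ n]exprNn; congr (_ * _); exact: mulrAC.
Qed.

Lemma horner_conj_real (f : {poly C}) (w : C) :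
  map_poly Num.conj f = f -> (f.[w^*])^* = f.[w].
Proof. by move=> f_real; rewrite -(horner_map Num.conj) f_real /= conjCK. Qed.

Lemma G_poly_real k l : map_poly Num.conj (G_poly k l) = G_poly k l.
Proof. by rewrite /G_poly !(rmorphB, rmorphD, rmorph1) /= map_polyX !map_polyXn. Qed.

Lemma horner_G_poly k l (z : C) :
  (G_poly k l).[z] = 1 - z + z ^+ (l * k + 1) - z ^+ (k * (l + 1)).
Proof. by rewrite /G_poly !hornerE. Qed.

Lemma coef_G_poly k l : (0 < k)%N -> (0 < l)%N ->
  (G_poly k l)`_0 = 1 /\ (G_poly k l)`_1 = -1.
Proof.
move=> k_gt0 l_gt0; rewrite /G_poly !coefE.
have [-> -> -> ->] : [/\ (0 == l * k + 1)%N = false, (1 == l * k + 1)%N = false,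
  (0 == k * (l + 1))%N = false & (1 == k * (l + 1))%N = false] by split; lia.
by split; rewrite /= ?subr0 ?addr0 ?sub0r.
Qed.

Definition G_poly_rev (k l : nat) : {poly C} :=
  -1 + 'X^(k - 1) - 'X^(k * (l + 1) - 1) + 'X^(k * (l + 1)).

Lemma horner_G_poly_rev k l (z : C) : (0 < k)%N -> z != 0 ->
  z ^+ (k * (l + 1)) * (G_poly k l).[z^-1] = (G_poly_rev k l).[z].
Proof.
move=> k_gt0 z_neq0; rewrite horner_G_poly /G_poly_rev !hornerE !exprVn.
have eN1 : (k * (l + 1) = (k * (l + 1) - 1).+1)%N by lia.
have eNk : (k * (l + 1) = (k - 1) + (l * k + 1))%N by lia.
rewrite !mulrDr !mulrN mulr1 divff ?expf_neq0 //.
rewrite [in X in X / z]eN1 exprSr mulfK //.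
rewrite [in X in X / z ^+ (l * k + 1)]eNk exprD mulfK ?expf_neq0 //.
by ring.
Qed.

Lemma coef_G_poly_rev k l : (2 < k)%N -> (0 < l)%N ->
  (G_poly_rev k l)`_0 = -1 /\ (G_poly_rev k l)`_1 = 0.
Proof.
move=> k_gt2 l_gt0; rewrite /G_poly_rev !coefE.
have [-> -> ->] : [/\ (0 == k - 1)%N = false, (0 == k * (l + 1) - 1)%N = false
  & (0 == k * (l + 1))%N = false] by split; lia.
have [-> -> ->] : [/\ (1 == k - 1)%N = false, (1 == k * (l + 1) - 1)%N = false
  & (1 == k * (l + 1))%N = false] by split; lia.
by split; rewrite /= ?oppr0 ?addr0.
Qed.

Lemma G_poly_not_unitary k l : (2 < k)%N -> (0 < l)%N -> ~ unitary_poly (G_poly k l).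
Proof.
move=> k_gt2 l_gt0 /unitary_poly_reflect [n [c [c_neq0 reflect_G]]].
have k_gt0 : (0 < k)%N by lia.
have [G0 G1] := coef_G_poly k_gt0 l_gt0.
have [Grev0 Grev1] := coef_G_poly_rev k_gt2 l_gt0.
have G_reflect : 'X^(k * (l + 1)) * G_poly k l = 'X^n * (c *: G_poly_rev k l).
  apply/eqP; rewrite -subr_eq0; apply/eqP/nonzero_roots_poly_eq0 => z z_neq0.
  rewrite /root hornerD hornerN !hornerM hornerZ !hornerXn reflect_G // horner_conj_real ?G_poly_real //.
  by rewrite -horner_G_poly_rev // subr_eq0; apply/eqP; ring.
have G0_neq0 : (G_poly k l)`_0 != 0 by rewrite G0 oner_neq0.
have cGrev0_neq0 : (c *: G_poly_rev k l)`_0 != 0 by rewrite coefZ Grev0 mulrN1 oppr_eq0.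
have [_ G_eq] := mulXn_cancel G0_neq0 cGrev0_neq0 G_reflect.
by move: G1; rewrite G_eq coefZ Grev1 mulr0 => /eqP; rewrite eq_sym oppr_eq0 oner_eq0.
Qed.

Lemma unitary_poly_prod (s : seq C) : (forall a, a \in s -> a * a^* = 1) ->
  unitary_poly (\prod_(a <- s) (1 - a%:P * 'X)).
Proof.
move=> s_unit; exists (size s), (diag_mx (\row_i s`_i)); split.
  rewrite /unitary_mx map_diag_mx tr_diag_mx mulmx_diag -diag_const_mx.
  by congr diag_mx; apply/matrixP => i j; rewrite !mxE s_unit ?mem_nth.
rewrite /det_one_minus mul_mx_scalar (big_nth 0) big_mkord.
rewrite (_ : _ - _ = diag_mx (\row_i (1 - (s`_i)%:P * 'X))) ?det_diag.
  by apply: eq_bigr => i _; rewrite mxE.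
apply/matrixP => i j; rewrite !mxE.
case: eqP => [->|_]; first by rewrite !mulr1n mulrC.
by rewrite !mulr0n polyC0 mulr0 subr0.
Qed.

Lemma XsubC_scale_one_minus (R : fieldType) (z : R) : z != 0 ->
  'X - z%:P = (- z) *: (1 - (z^-1)%:P * 'X).
Proof.
move=> z_neq0; rewrite scalerBr -!mul_polyC mulr1 mulrA -polyCM mulNr mulfV //.
by rewrite !polyCN polyC1 mulN1r opprK addrC.
Qed.

Lemma horner0_prod_one_minus (R : comNzRingType) (s : seq R) :
  (\prod_(a <- s) (1 - a%:P * 'X)).[0] = 1.
Proof.
by rewrite horner_prod; apply: big1 => a _; rewrite !hornerE subr0.
Qed.

Lemma unitary_poly_of_roots (f : {poly C}) :
  f.[0] = 1 -> (forall z, root f z -> `|z| = 1) -> unitary_poly f.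
Proof.
move=> f0 roots_unit; have [rs f_eq] := closed_field_poly_normal f.
have f_neq0 : f != 0 by apply: contra_eqN f0 => /eqP ->; rewrite horner0 eq_sym oner_eq0.
have rs_unit z : z \in rs -> `|z| = 1.
  move=> z_rs; apply: roots_unit.
  by rewrite f_eq rootZ ?root_prod_XsubC ?lead_coef_eq0.
have rs_neq0 z : z \in rs -> z != 0.
  by move/rs_unit => z_unit; rewrite -normr_eq0 z_unit oner_neq0.
set g := \prod_(a <- map GRing.inv rs) (1 - a%:P * 'X).
have f_scale : f = (lead_coef f * \prod_(z <- rs) (- z)) *: g.
  rewrite {1}f_eq /g big_map -scalerA -scaler_prod big_seq [in RHS]big_seq.
  by congr (_ *: _); apply: eq_bigr => z /rs_neq0/XsubC_scale_one_minus.
have f_eq_g : f = g.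
  move: (congr1 (horner^~ 0) f_scale) => /=.
  by rewrite hornerZ horner0_prod_one_minus f0 mulr1 => c1; rewrite {1}f_scale -c1 scale1r.
rewrite f_eq_g; apply: unitary_poly_prod => _ /mapP [z z_rs ->].
by rewrite fmorphV -invfM -normCK rs_unit // expr1n invr1.
Qed.

Lemma G_poly1_unitary l : unitary_poly (G_poly 1 l).
Proof.
apply: unitary_poly_of_roots => [|z]; rewrite ?/root horner_G_poly muln1 mul1n addrK.
  by rewrite subr0.
by rewrite subr_eq0 => /eqP <-; rewrite normr1.
Qed.

Lemma G_poly2_unitary l : unitary_poly (G_poly 2 l).
Proof.
have G_factor z : (G_poly 2 l).[z] = (1 - z) * (1 + z ^+ (l * 2 + 1)).
  rewrite horner_G_poly (_ : (2 * (l + 1) = (l * 2 + 1).+1)%N); last by lia.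
  by rewrite exprS; ring.
apply: unitary_poly_of_roots => [|z]; rewrite ?/root G_factor.
  by rewrite !subr0 mul1r expr0n addn1 addr0.
rewrite mulf_eq0 subr_eq0 addrC addr_eq0 => /orP [/eqP <- | /eqP z_pow].
  by rewrite normr1.
have : `|z| ^+ (l * 2 + 1) = 1 by rewrite -normrX z_pow normrN normr1.
by move/eqP; rewrite pexpr_eq1 ?addn1 // => /eqP.
Qed.

Theorem proposition13 (k l : nat) (hk : (0 < k)%N) (hl : (0 < l)%N) :
  unitary_poly (G_poly k l) <-> (k = 1%N \/ k = 2%N).
Proof.
split=> [G_unitary | [-> | ->]]; [| exact: G_poly1_unitary | exact: G_poly2_unitary].
have [k_gt2 | k_le2] := ltnP 2 k; last by lia.
by case: (G_poly_not_unitary k_gt2 hl G_unitary).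
Qed.
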